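(* For every $0<\alpha<1$, $$1-2\cdot 2^{1-\alpha}+3^{1-\alpha}-\zeta(\alpha-1)>0,$$ where $\zeta$ is the Riemann zeta function.
   Context: In the paper this quantity is denoted $\delta_2^{(\alpha)}=\sigma_2^{(\alpha)}-\zeta(\alpha-1)$ with $\sigma_2^{(\alpha)}=1-2\cdot 2^{1-\alpha}+3^{1-\alpha}$. $\zeta$ is the analytically continued Riemann zeta function. *)

From Stdlib Require Import Reals.
From Coquelicot Require Import Coquelicot.
Open Scope R_scope.

(* Riemann zeta function on real arguments s > -1, s <> 1, as the limit
     zeta(s) = lim_{M->oo} ( sum_{n=1}^M n^{-s} - M^{1-s}/(1-s) - M^{-s}/2 ),
   which is the (first-order Euler–Maclaurin) formula for the analytic
   continuation of zeta to Re s > -1, s <> 1.  Here M = N+1. *)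
Definition zeta_partial (s : R) (N : nat) : R :=
  sum_f_R0 (fun k => Rpower (INR (S k)) (- s)) N
  - Rpower (INR (S N)) (1 - s) / (1 - s)
  - Rpower (INR (S N)) (- s) / 2.

Definition zeta (s : R) : R := real (Lim_seq (zeta_partial s)).

From Stdlib Require Import Reals Lra Psatz.
From Coquelicot Require Import Coquelicot.
Open Scope R_scope.

(* With b = 1 - alpha, zeta(-b) is the limit of the Euler-Maclaurin sums
   z_N = sum_(n <= N+1) n^b - (N+1)^(b+1)/(b+1) - (N+1)^b/2.  The step
   z_(N+1) - z_N is minus the trapezoidal defect of x^b on [N+1, N+2] corrected
   by k t^2 (f'(a+t) - f'(a)); a sign check on its third t-derivative shows that
   this defect is <= 0 for k = 1/12 and >= 0 for k = 1/20 (when N >= 1).  Hence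
   z_N - k f'(N+2) increases for k = 1/12 and decreases for k = 1/20, these two
   sequences are adjacent, and zeta(-b) <= 1 + 2^b/2 - 2^(b+1)/(b+1) - b 2^b/40.
   The claim then reduces to (3/2)^b > 5/2 - 2/(b+1) - b/40, which follows from
   (3/2)^b >= exp(2b/5) (as ln(3/2) >= 2/5) and the cubic Taylor bound for exp. *)

Lemma le_of_is_derive_nonneg (g dg : R -> R) (a b : R) : a <= b ->
  (forall t, a <= t <= b -> is_derive g t (dg t)) ->
  (forall t, a <= t <= b -> 0 <= dg t) -> g a <= g b.
Proof.
  intros Hab Hd Hpos.
  destruct (Req_dec a b) as [<- | Hne]; [lra |].
  destruct (MVT_cor2 g dg a b) as [c [Hc Hmid]]; [lra | |].
  - intros c Hc; apply is_derive_Reals; auto.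
  - assert (0 <= dg c) by (apply Hpos; lra). nra.
Qed.

(* [auto_derive] leaves [Derive] applied to eta-expanded functions. *)
Lemma Derive_eta_of_is_derive {g : R -> R} {x l : R} :
  is_derive g x l -> Derive (fun y => g y) x = l.
Proof. apply is_derive_unique. Qed.

Lemma nonneg_of_is_derive3 (g g1 g2 g3 : R -> R) :
  (forall t, 0 <= t <= 1 -> is_derive g t (g1 t)) ->
  (forall t, 0 <= t <= 1 -> is_derive g1 t (g2 t)) ->
  (forall t, 0 <= t <= 1 -> is_derive g2 t (g3 t)) ->
  g 0 = 0 -> g1 0 = 0 -> g2 0 = 0 ->
  (forall t, 0 <= t <= 1 -> 0 <= g3 t) -> 0 <= g 1.
Proof.
  intros Hg Hg1 Hg2 Z Z1 Z2 Hg3.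
  assert (step : forall p dp : R -> R, p 0 = 0 ->
            (forall t, 0 <= t <= 1 -> is_derive p t (dp t)) ->
            (forall t, 0 <= t <= 1 -> 0 <= dp t) ->
            forall t, 0 <= t <= 1 -> 0 <= p t).
  { intros p dp Zp Hd Hpos t Ht. rewrite <- Zp.
    apply (le_of_is_derive_nonneg p dp); [lra | |];
      intros s Hs; [apply Hd | apply Hpos]; lra. }
  apply (step g g1); auto; [| lra].
  apply (step g1 g2); auto.
  apply (step g2 g3); auto.
Qed.

Section EulerMaclaurinDefect.

Variables (F f f1 f2 f3 f4 : R -> R) (a : R).
Hypothesis HF : forall x, a <= x <= a + 1 -> is_derive F x (f x).
Hypothesis Hf : forall x, a <= x <= a + 1 -> is_derive f x (f1 x).
Hypothesis Hf1 : forall x, a <= x <= a + 1 -> is_derive f1 x (f2 x).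
Hypothesis Hf2 : forall x, a <= x <= a + 1 -> is_derive f2 x (f3 x).
Hypothesis Hf3 : forall x, a <= x <= a + 1 -> is_derive f3 x (f4 x).

(* The error of the trapezoidal rule for [int_a^(a+t) f], corrected by the
   boundary term [k t^2 (f'(a+t) - f'(a))]; [k = 1/12] is the Euler-Maclaurin
   constant. *)
Definition em_defect (k t : R) : R :=
  F (a + t) - F a - t * (f a + f (a + t)) / 2 + k * t ^ 2 * (f1 (a + t) - f1 a).

Definition em_defect1 (k t : R) : R :=
  f (a + t) - (f a + f (a + t)) / 2 - t * f1 (a + t) / 2
  + 2 * k * t * (f1 (a + t) - f1 a) + k * t ^ 2 * f2 (a + t).

Definition em_defect2 (k t : R) : R :=
  - t * f2 (a + t) / 2 + 2 * k * (f1 (a + t) - f1 a)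
  + 4 * k * t * f2 (a + t) + k * t ^ 2 * f3 (a + t).

Definition em_defect3 (k t : R) : R :=
  (6 * k - 1 / 2) * (f2 (a + t) + t * f3 (a + t)) + k * t ^ 2 * f4 (a + t).

Lemma is_derive_em_defect k t : 0 <= t <= 1 ->
  is_derive (em_defect k) t (em_defect1 k t).
Proof.
  intros Ht. unfold em_defect, em_defect1.
  assert (Hx : a <= a + t <= a + 1) by lra.
  auto_derive.
  - repeat split; eexists;
      first [exact (HF _ Hx) | exact (Hf _ Hx) | exact (Hf1 _ Hx)].
  - rewrite (Derive_eta_of_is_derive (HF _ Hx)), (Derive_eta_of_is_derive (Hf _ Hx)),
      (Derive_eta_of_is_derive (Hf1 _ Hx)).
    field.
Qed.

Lemma is_derive_em_defect1 k t : 0 <= t <= 1 ->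
  is_derive (em_defect1 k) t (em_defect2 k t).
Proof.
  intros Ht. unfold em_defect1, em_defect2.
  assert (Hx : a <= a + t <= a + 1) by lra.
  auto_derive.
  - repeat split; eexists;
      first [exact (Hf _ Hx) | exact (Hf1 _ Hx) | exact (Hf2 _ Hx)].
  - rewrite (Derive_eta_of_is_derive (Hf _ Hx)), (Derive_eta_of_is_derive (Hf1 _ Hx)),
      (Derive_eta_of_is_derive (Hf2 _ Hx)).
    field.
Qed.

Lemma is_derive_em_defect2 k t : 0 <= t <= 1 ->
  is_derive (em_defect2 k) t (em_defect3 k t).
Proof.
  intros Ht. unfold em_defect2, em_defect3.
  assert (Hx : a <= a + t <= a + 1) by lra.
  auto_derive.
  - repeat split; eexists;
      first [exact (Hf1 _ Hx) | exact (Hf2 _ Hx) | exact (Hf3 _ Hx)].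
  - rewrite (Derive_eta_of_is_derive (Hf1 _ Hx)), (Derive_eta_of_is_derive (Hf2 _ Hx)),
      (Derive_eta_of_is_derive (Hf3 _ Hx)).
    field.
Qed.

Lemma em_defect_nonneg k :
  (forall t, 0 <= t <= 1 -> 0 <= em_defect3 k t) -> 0 <= em_defect k 1.
Proof.
  intros H3.
  apply (nonneg_of_is_derive3 _ (em_defect1 k) (em_defect2 k) (em_defect3 k));
    [exact (is_derive_em_defect k) | exact (is_derive_em_defect1 k)
    | exact (is_derive_em_defect2 k) | | | | exact H3];
    unfold em_defect, em_defect1, em_defect2; rewrite Rplus_0_r; field.
Qed.

Lemma em_defect_nonpos k :
  (forall t, 0 <= t <= 1 -> em_defect3 k t <= 0) -> em_defect k 1 <= 0.
Proof.
  intros H3.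
  enough (0 <= - em_defect k 1) by lra.
  apply (nonneg_of_is_derive3 (fun t => - em_defect k t) (fun t => - em_defect1 k t)
           (fun t => - em_defect2 k t) (fun t => - em_defect3 k t)).
  - intros t Ht; apply (is_derive_opp (em_defect k)), is_derive_em_defect; exact Ht.
  - intros t Ht; apply (is_derive_opp (em_defect1 k)), is_derive_em_defect1; exact Ht.
  - intros t Ht; apply (is_derive_opp (em_defect2 k)), is_derive_em_defect2; exact Ht.
  - cbv beta; unfold em_defect; rewrite Rplus_0_r; field.
  - cbv beta; unfold em_defect1; rewrite Rplus_0_r; field.
  - cbv beta; unfold em_defect2; rewrite Rplus_0_r; field.
  - intros t Ht; specialize (H3 t Ht); lra.
Qed.

End EulerMaclaurinDefect.

Definition em_partial (F f : R -> R) (N : nat) : R :=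
  sum_f_R0 (fun n => f (INR (S n))) N - F (INR (S N)) - f (INR (S N)) / 2.

Lemma em_partial_succ (F f f1 : R -> R) (k : R) (N : nat) :
  em_partial F f (S N) - em_partial F f N =
  - em_defect F f f1 (INR (S N)) k 1 + k * (f1 (INR (S (S N))) - f1 (INR (S N))).
Proof.
  unfold em_partial, em_defect. rewrite tech5, (S_INR (S N)). field.
Qed.

Lemma Lim_seq_le_of_adjacent (u d : nat -> R) (k1 k2 : R) :
  is_lim_seq d 0 ->
  (forall n, u n - k1 * d n <= u (S n) - k1 * d (S n)) ->
  (forall n, u (S n) - k2 * d (S n) <= u n - k2 * d n) ->
  real (Lim_seq u) <= u 0%nat - k2 * d 0%nat.
Proof.
  intros Hd Hlow Hup.
  set (v := fun n => u n - k2 * d n).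
  assert (Hgap : is_lim_seq (fun n => v n - (u n - k1 * d n)) 0).
  { apply is_lim_seq_ext with (fun n => (k1 - k2) * d n); [intros n; unfold v; ring |].
    replace (Finite 0) with (Rbar_mult (k1 - k2) 0) by (simpl; f_equal; ring).
    apply is_lim_seq_scal_l, Hd. }
  destruct (ex_lim_seq_adj _ v Hlow Hup Hgap) as [_ [[l Hv] _]].
  assert (Hu : is_lim_seq u l).
  { apply is_lim_seq_ext with (fun n => v n + k2 * d n); [intros n; unfold v; ring |].
    replace l with (l + k2 * 0) by ring.
    apply is_lim_seq_plus'; [exact Hv | exact (is_lim_seq_scal_l d k2 0 Hd)]. }
  assert (Hdecr : forall n, v n <= v 0%nat).
  { induction n as [| n IH]; [lra | specialize (Hup n); unfold v in *; lra]. }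
  rewrite (is_lim_seq_unique _ _ Hu).
  apply (is_lim_seq_le v (fun _ => v 0%nat) l (v 0%nat) Hdecr Hv (is_lim_seq_const _)).
Qed.

Fixpoint falling (b : R) (j : nat) : R :=
  match j with
  | O => 1
  | S j => falling b j * (b - INR j)
  end.

Definition pow_deriv (b : R) (j : nat) (x : R) : R := falling b j * Rpower x (b - INR j).

Definition pow_primitive (b x : R) : R := Rpower x (b + 1) / (b + 1).

Lemma is_derive_scal_Rpower (c e x : R) : 0 < x ->
  is_derive (fun y => c * Rpower y e) x (c * (e * Rpower x (e - 1))).
Proof.
  intros Hx. apply is_derive_scal, is_derive_Reals, derivable_pt_lim_power, Hx.
Qed.

Lemma is_derive_pow_deriv (b : R) (j : nat) (x : R) : 0 < x ->
  is_derive (pow_deriv b j) x (pow_deriv b (S j) x).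
Proof.
  intros Hx. unfold pow_deriv. cbn [falling].
  replace (b - INR (S j)) with (b - INR j - 1) by (rewrite S_INR; ring).
  rewrite Rmult_assoc. apply is_derive_scal_Rpower, Hx.
Qed.

Lemma is_derive_pow_primitive (b x : R) : 0 < x -> b + 1 <> 0 ->
  is_derive (pow_primitive b) x (pow_deriv b 0 x).
Proof.
  intros Hx Hb. unfold pow_primitive, pow_deriv. cbn [falling INR].
  apply (is_derive_ext (fun y => / (b + 1) * Rpower y (b + 1)));
    [intros y; apply Rmult_comm |].
  replace (1 * Rpower x (b - 0)) with (/ (b + 1) * ((b + 1) * Rpower x (b + 1 - 1)))
    by (replace (b + 1 - 1) with (b - 0) by ring; field; exact Hb).
  apply is_derive_scal_Rpower, Hx.
Qed.

Lemma em_defect3_pow (b a k t : R) : 0 < a + t ->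
  em_defect3 (pow_deriv b 2) (pow_deriv b 3) (pow_deriv b 4) a k t =
  b * (b - 1) * Rpower (a + t) (b - 4) *
  ((6 * k - 1 / 2) * ((a + t) ^ 2 + t * (b - 2) * (a + t)) + k * t ^ 2 * (b - 2) * (b - 3)).
Proof.
  intros Hx. unfold em_defect3, pow_deriv. cbn [falling].
  replace (b - INR 2) with (b - 4 + INR 2) by (simpl; ring).
  replace (b - INR 3) with (b - 4 + INR 1) by (simpl; ring).
  replace (b - INR 4) with (b - 4) by (simpl; ring).
  rewrite !Rpower_plus, !Rpower_pow by exact Hx.
  simpl INR. ring.
Qed.

Lemma em_defect3_pow_twelfth_nonpos (b a t : R) : 0 < b < 1 -> 0 < a -> 0 <= t ->
  em_defect3 (pow_deriv b 2) (pow_deriv b 3) (pow_deriv b 4) a (1 / 12) t <= 0.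
Proof.
  intros Hb Ha Ht. rewrite em_defect3_pow by lra.
  assert (0 < Rpower (a + t) (b - 4)) by apply exp_pos.
  assert (0 <= t ^ 2 * ((2 - b) * (3 - b))) by (apply Rmult_le_pos; nra).
  assert (0 < b * (1 - b) * Rpower (a + t) (b - 4)) by (apply Rmult_lt_0_compat; nra).
  nra.
Qed.

(* For [a >= 2] and [t <= 1] we have [a + t >= 3 t], which makes the bracket
   below nonpositive. *)
Lemma em_defect3_pow_twentieth_nonneg (b a t : R) : 0 < b < 1 -> 2 <= a -> 0 <= t <= 1 ->
  0 <= em_defect3 (pow_deriv b 2) (pow_deriv b 3) (pow_deriv b 4) a (1 / 20) t.
Proof.
  intros Hb Ha Ht. rewrite em_defect3_pow by lra.
  set (x := a + t).
  assert (Hx : 3 * t <= x /\ 2 <= x) by (unfold x; lra). clearbody x.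
  assert (Hbracket : (1 / 20) * t ^ 2 * (2 - b) * (3 - b) + (1 / 5) * t * (2 - b) * x
                     <= (1 / 5) * x ^ 2).
  { assert (t ^ 2 * ((2 - b) * (3 - b)) <= t ^ 2 * 6) by (apply Rmult_le_compat_l; nra).
    assert (0 <= t * x * b) by (apply Rmult_le_pos; nra).
    nra. }
  assert (0 < b * (1 - b) * Rpower x (b - 4)).
  { apply Rmult_lt_0_compat; [nra | apply exp_pos]. }
  nra.
Qed.

Lemma is_lim_seq_pow_deriv (b : R) (j : nat) : b < INR j ->
  is_lim_seq (fun n => pow_deriv b j (INR (S n))) 0.
Proof.
  intros Hbj. set (e := b - INR j). assert (He : e < 0) by (unfold e; lra).
  assert (L : is_lim (fun y => falling b j * exp (e * ln y)) p_infty 0).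
  { replace (Finite 0) with (Rbar_mult (falling b j) 0) by (simpl; f_equal; ring).
    apply is_lim_scal_l.
    apply (is_lim_comp exp (fun y => e * ln y) p_infty 0 m_infty).
    - apply is_lim_exp_m.
    - replace m_infty with (Rbar_mult e p_infty).
      + apply is_lim_scal_l, is_lim_ln_p.
      + simpl. destruct (Rle_dec 0 e); [exfalso; lra | reflexivity].
    - exists 0. intros y Hy. discriminate. }
  apply (is_lim_comp_seq _ (fun n => INR (S n)) p_infty 0 L).
  - exists 0%nat. intros n _. discriminate.
  - apply (is_lim_seq_incr_1 INR), is_lim_seq_INR.
Qed.

Lemma em_defect_pow_twelfth_nonpos (b a : R) : 0 < b < 1 -> 0 < a ->
  em_defect (pow_primitive b) (pow_deriv b 0) (pow_deriv b 1) a (1 / 12) 1 <= 0.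
Proof.
  intros Hb Ha.
  apply (em_defect_nonpos _ _ _ (pow_deriv b 2) (pow_deriv b 3) (pow_deriv b 4));
    [intros x Hx; apply is_derive_pow_primitive; lra
    | intros x Hx; apply is_derive_pow_deriv; lra ..
    | intros t Ht; apply em_defect3_pow_twelfth_nonpos; lra].
Qed.

Lemma em_defect_pow_twentieth_nonneg (b a : R) : 0 < b < 1 -> 2 <= a ->
  0 <= em_defect (pow_primitive b) (pow_deriv b 0) (pow_deriv b 1) a (1 / 20) 1.
Proof.
  intros Hb Ha.
  apply (em_defect_nonneg _ _ _ (pow_deriv b 2) (pow_deriv b 3) (pow_deriv b 4));
    [intros x Hx; apply is_derive_pow_primitive; lra
    | intros x Hx; apply is_derive_pow_deriv; lra ..
    | intros t Ht; apply em_defect3_pow_twentieth_nonneg; lra].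
Qed.

Lemma zeta_partial_eq_em_partial (b : R) (N : nat) :
  zeta_partial (- b) N = em_partial (pow_primitive b) (pow_deriv b 0) N.
Proof.
  unfold zeta_partial, em_partial, pow_primitive, pow_deriv. cbn [falling].
  replace (1 - - b) with (b + 1) by ring. replace (- - b) with (b - INR 0) by (simpl; ring).
  f_equal; [f_equal; apply sum_eq; intros; ring | field].
Qed.

Lemma zeta_neg_le (b : R) : 0 < b < 1 ->
  zeta (- b) <= 1 + Rpower 2 b / 2 - 2 * Rpower 2 b / (b + 1) - b * Rpower 2 b / 40.
Proof.
  intros Hb.
  set (F := pow_primitive b). set (f := pow_deriv b 0). set (f1 := pow_deriv b 1).
  assert (Hge2 : forall n, 2 <= INR (S (S n))).
  { intros n. rewrite !S_INR. pose proof (pos_INR n). lra. }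
  replace (zeta (- b)) with (real (Lim_seq (fun n => em_partial F f (S n)))).
  2: { unfold zeta. rewrite Lim_seq_incr_1. f_equal.
       apply Lim_seq_ext. intros n. symmetry. apply zeta_partial_eq_em_partial. }
  eapply Rle_trans;
    [apply (Lim_seq_le_of_adjacent _ (fun n => f1 (INR (S (S n)))) (1 / 12) (1 / 20)) |].
  - apply (is_lim_seq_incr_1 (fun n => f1 (INR (S n)))).
    apply is_lim_seq_pow_deriv. simpl. lra.
  - intros n. pose proof (em_partial_succ F f f1 (1 / 12) (S n)).
    assert (Hpos : 0 < INR (S (S n))) by (specialize (Hge2 n); lra).
    pose proof (em_defect_pow_twelfth_nonpos b (INR (S (S n))) Hb Hpos).
    unfold F, f, f1 in *. lra.
  - intros n. pose proof (em_partial_succ F f f1 (1 / 20) (S n)).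
    pose proof (em_defect_pow_twentieth_nonneg b (INR (S (S n))) Hb (Hge2 n)).
    unfold F, f, f1 in *. lra.
  - right. unfold em_partial, F, f, f1, pow_primitive, pow_deriv. cbn [falling INR sum_f_R0].
    replace (1 + 1) with 2 by ring. replace (b - 0) with b by ring.
    replace (b - 1) with (b + Ropp 1) by ring.
    rewrite !Rpower_plus, Rpower_Ropp, Rpower_1 by lra.
    replace (Rpower 1 b) with 1 by (unfold Rpower; rewrite ln_1, Rmult_0_r, exp_0; reflexivity).
    field. lra.
Qed.

Lemma ln_three_halves_ge : 2 / 5 <= ln (3 / 2).
Proof.
  set (g := fun y => ln y - 2 * (y - 1) / (y + 1)).
  enough (g 1 <= g (3 / 2)) by (unfold g in *; rewrite ln_1 in *; lra).
  apply (le_of_is_derive_nonneg g (fun y => (y - 1) ^ 2 / (y * (y + 1) ^ 2))); [lra | |].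
  - intros t Ht. unfold g. auto_derive; [lra | field; lra].
  - intros t Ht. apply Rdiv_le_0_compat; [nra |].
    apply Rmult_lt_0_compat; [lra | apply pow_lt; lra].
Qed.

Definition exp_taylor3 (x : R) : R := 1 + x + x ^ 2 / 2 + x ^ 3 / 6.

Lemma exp_taylor3_le (x : R) : 0 <= x -> exp_taylor3 x <= exp x.
Proof.
  intros Hx. replace (exp_taylor3 x) with (sum_f_R0 (fun k => x ^ k / INR (Factorial.fact k)) 3).
  - apply exp_ge_taylor, Hx.
  - unfold exp_taylor3. simpl. field.
Qed.

Lemma exp_taylor3_le_Rpower_three_halves (b : R) : 0 <= b ->
  exp_taylor3 (2 / 5 * b) <= Rpower (3 / 2) b.
Proof.
  intros Hb. eapply Rle_trans; [apply exp_taylor3_le; lra |]. unfold Rpower.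
  assert (Hexp : 2 / 5 * b <= b * ln (3 / 2)) by (pose proof ln_three_halves_ge; nra).
  destruct (Rle_lt_or_eq_dec _ _ Hexp) as [Hlt | ->];
    [apply Rlt_le, exp_increasing, Hlt | apply Rle_refl].
Qed.

Lemma exp_taylor3_margin (b : R) : 0 < b < 1 ->
  0 < exp_taylor3 (2 / 5 * b) - 5 / 2 + 2 / (b + 1) + b / 40.
Proof.
  intros Hb. unfold exp_taylor3.
  replace (1 + 2 / 5 * b + (2 / 5 * b) ^ 2 / 2 + (2 / 5 * b) ^ 3 / 6 - 5 / 2
           + 2 / (b + 1) + b / 40)
    with (((1 + 2 / 5 * b + (2 / 5 * b) ^ 2 / 2 + (2 / 5 * b) ^ 3 / 6 - 5 / 2 + b / 40)
           * (b + 1) + 2) / (b + 1))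
    by (field; lra).
  apply Rdiv_lt_0_compat; [| lra].
  assert (0 <= b * (b - 17 / 20) ^ 2) by (apply Rmult_le_pos; [lra | apply pow2_ge_0]).
  assert (0 <= b ^ 2 * (b - 17 / 20) ^ 2) by (apply Rmult_le_pos; apply pow2_ge_0).
  assert (0 <= b ^ 3) by (apply pow_le; lra).
  assert (0 <= b ^ 4) by (apply pow_le; lra).
  nra.
Qed.

Theorem lemma10 (alpha : R) (h0 : 0 < alpha) (h1 : alpha < 1) :
  1 - 2 * Rpower 2 (1 - alpha) + Rpower 3 (1 - alpha) - zeta (alpha - 1) > 0.
Proof.
  set (b := 1 - alpha). assert (Hb : 0 < b < 1) by (unfold b; lra).
  replace (alpha - 1) with (- b) by (unfold b; ring).
  pose proof (zeta_neg_le b Hb) as Hzeta.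
  pose proof (exp_taylor3_le_Rpower_three_halves b (Rlt_le _ _ (proj1 Hb))) as Hr.
  pose proof (exp_taylor3_margin b Hb) as Hmargin.
  replace (Rpower 3 b) with (Rpower 2 b * Rpower (3 / 2) b)
    by (rewrite Rpower_mult_distr by lra; f_equal; field).
  set (y := Rpower 2 b) in *. set (r := Rpower (3 / 2) b) in *.
  set (P := exp_taylor3 (2 / 5 * b)) in *.
  assert (Hy : 0 < y) by apply exp_pos.
  assert (Hsplit : 1 - 2 * y + y * r - (1 + y / 2 - 2 * y / (b + 1) - b * y / 40)
                   = y * (r - 5 / 2 + 2 / (b + 1) + b / 40)) by (field; lra).
  assert (0 < y * (P - 5 / 2 + 2 / (b + 1) + b / 40)) by (apply Rmult_lt_0_compat; lra).
  assert (y * (P - 5 / 2 + 2 / (b + 1) + b / 40) <= y * (r - 5 / 2 + 2 / (b + 1) + b / 40))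
    by (apply Rmult_le_compat_l; lra).
  lra.
Qed.
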